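(* Let $\Phi$ be an irreducible crystallographic root system and $k$ a positive integer. If $R$ is a bounded dominant region of the $k$-Catalan arrangement of $\Phi$, then the pseudomaximal alcove of $R$ is equal to the maximal alcove of $R$.
   Context: $\Phi$ lives in a Euclidean space $V$ with inner product $\langle\cdot,\cdot\rangle$, simple system $S$, positive system $\Phi^+$. $H_\alpha^r=\{x\mid\langle x,\alpha\rangle=r\}$. The $K$-Catalan arrangement consists of $H_\alpha^r$, $\alpha\in\Phi$, $r\in\{0,\ldots,K\}$; regions are components of its complement, dominant if $\langle x,\alpha\rangle>0$ for all $\alpha\in\Phi^+$, $x\in R$. Alcoves are the connected components of the complement of all $H_\alpha^r$, $\alpha\in\Phi$, $r\in\mathbb{Z}$; for an alcove $A$ and $\alpha\in\Phi^+$, $r(A,\alpha)$ is the unique integer $r$ with $r-1<\langle x,\alpha\rangle<r$ for all $x\in A$. Root poset: $\alpha\le\beta$ iff $\beta-\alpha$ is a nonnegative integer combination of $S$; ideals are down-closed. For a dominant region $R$ of the $K$-Catalan arrangement, $\theta(R)=(I_1,\ldots,I_K)$ with $I_i=\{\alpha\in\Phi^+\mid\langle x,\alpha\rangle<i\ \forall x\in R\}$; $\theta$ is known to be a bijection onto geometric chains of $K$ ideals (chains $I_1\subseteq\cdots\subseteq I_K$ with $J_i=\Phi^+\setminus I_i$ such that $(I_i+I_j)\cap\Phi^+\subseteq I_{i+j}$ for $i+j\le K$ and $(J_i+J_j)\cap\Phi^+\subseteq J_{i+j}$ for $i,j\in\{0,\ldots,K\}$, with $I_0=\varnothing$, $J_0=\Phi^+$,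 $J_i=J_K$ for $i>K$), and bounded regions correspond to positive chains ($S\subseteq I_K$). For a chain $\mathcal{I}$ of $K$ ideals, $r_\alpha(\mathcal{I})=\min\{r_1+\cdots+r_m\mid\alpha=\alpha_1+\cdots+\alpha_m,\alpha_i\in I_{r_i}\}$ ($\infty$ if none). For a bounded dominant region $R$ with $\mathcal{I}=\theta(R)$, its maximal alcove is the (known to exist and lie in $R$) alcove $B$ with $r(B,\alpha)=r_\alpha(\mathcal{I})$ for all $\alpha\in\Phi^+$. For any dominant region $R$ of the $k$-Catalan arrangement with $\mathcal{I}=\theta(R)$, let $\underline{\mathcal{I}}=(I_1,\ldots,I_k,\underline{I}_{k+1})$ with $\underline{I}_{k+1}=\bigcup_{i+j=k+1}((I_i+I_j)\cap\Phi^+)\cup I_k\cup S$; this is a positive geometric chain of $k+1$ ideals, and the pseudomaximal alcove of $R$ is the maximal alcove of the bounded dominant region $\theta^{-1}(\underline{\mathcal{I}})$ of the $(k+1)$-Catalan arrangement. *)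

From HB Require Import structures.
From mathcomp Require Import all_boot all_order all_algebra.
From mathcomp Require Import all_classical all_reals all_analysis.
Set Implicit Arguments. Unset Strict Implicit. Unset Printing Implicit Defensive.
Import Order.TTheory GRing.Theory Num.Theory.
Import numFieldNormedType.Exports.
Local Open Scope classical_set_scope.
Local Open Scope ring_scope.

Section RootDefs.
Variables (R : realType) (n : nat).
Notation V := 'rV[R]_n.

Definition dot (u v : V) : R := (u *m v^T) 0 0.

Definition refl (a x : V) : V := x - ((2 * dot x a) / dot a a) *: a.

Definition spans (Phi : seq V) : Prop :=
  forall x : V, exists c : 'I_(size Phi) -> R, x = \sum_(i < size Phi) c i *: Phi`_i.

Definition is_root_system (Phi : seq V) : Prop :=
  [/\ (0 : V) \notin Phi, spans Phi,
      (forall a b, a \in Phi -> b \in Phi -> refl a b \in Phi) &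
      (forall a (c : R), a \in Phi -> c *: a \in Phi -> c = 1 \/ c = -1)].

Definition crystallographic (Phi : seq V) : Prop :=
  forall a b, a \in Phi -> b \in Phi -> exists z : int, 2 * dot a b / dot b b = z%:~R.

Definition irreducible_rs (Phi : seq V) : Prop :=
  forall P : V -> Prop,
    (exists2 a, a \in Phi & P a) -> (exists2 a, a \in Phi & ~ P a) ->
    exists a b, [/\ a \in Phi, b \in Phi, P a, ~ P b & dot a b != 0].

Definition nonneg_int_comb (S : seq V) (x : V) : Prop :=
  exists c : 'I_(size S) -> nat, x = \sum_(i < size S) (c i)%:R *: S`_i.

Definition lin_indep (S : seq V) : Prop :=
  forall c : 'I_(size S) -> R, \sum_(i < size S) c i *: S`_i = 0 -> forall i, c i = 0.

Definition simple_system (Phi S : seq V) : Prop :=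
  [/\ {subset S <= Phi}, lin_indep S &
      forall a, a \in Phi -> nonneg_int_comb S a \/ nonneg_int_comb S (- a)].

Definition positive_root (Phi S : seq V) (a : V) : Prop :=
  a \in Phi /\ nonneg_int_comb S a.

Definition catalan_complement (Phi : seq V) (K : nat) : set V :=
  [set x | forall a r, a \in Phi -> (r <= K)%N -> dot x a != r%:R].

Definition catalan_region (Phi : seq V) (K : nat) (Rg : set V) : Prop :=
  exists2 x, catalan_complement Phi K x &
    Rg = connected_component (catalan_complement Phi K) x.

Definition dominant (Phi S : seq V) (Rg : set V) : Prop :=
  forall x a, Rg x -> positive_root Phi S a -> 0 < dot x a.

Definition affine_complement (Phi : seq V) : set V :=
  [set x | forall a (r : int), a \in Phi -> dot x a != r%:~R].

Definition alcove (Phi : seq V) (B : set V) : Prop :=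
  exists2 x, affine_complement Phi x & B = connected_component (affine_complement Phi) x.

Definition alcove_r (B : set V) (a : V) (r : int) : Prop :=
  forall x, B x -> r%:~R - 1 < dot x a < r%:~R.

(* --- chains of ideals, indexed 1..K --- *)
Definition theta (Phi S : seq V) (Rg : set V) (i : nat) : set V :=
  [set a | positive_root Phi S a /\ forall x, Rg x -> dot x a < i%:R].

Definition chain_eq (K : nat) (I J : nat -> set V) : Prop :=
  forall i, (1 <= i <= K)%N -> I i = J i.

Definition r_achievable (K : nat) (I : nat -> set V) (a : V) (s : nat) : Prop :=
  exists (als : seq V) (rs : seq nat),
    [/\ size als = size rs,
        all (fun r => (1 <= r <= K)%N) rs,
        (forall j, (j < size als)%N -> I (nth 0%N rs j) (nth 0 als j)),
        a = \sum_(b <- als) b &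
        s = sumn rs].

Definition r_alpha (K : nat) (I : nat -> set V) (a : V) (s : nat) : Prop :=
  r_achievable K I a s /\ forall s', r_achievable K I a s' -> (s <= s')%N.

Definition maximal_alcove (Phi S : seq V) (K : nat) (Rg B : set V) : Prop :=
  alcove Phi B /\
  forall a, positive_root Phi S a ->
    exists2 s, r_alpha K (theta Phi S Rg) a s & alcove_r B a (Posz s).

Definition underline_chain (Phi S : seq V) (k : nat) (I : nat -> set V) (i : nat) : set V :=
  if (i <= k)%N then I i else
  [set x | (exists i1 i2 a b, [/\ (1 <= i1)%N && (1 <= i2)%N, (i1 + i2 = k.+1)%N,
                                   I i1 a, I i2 b & x = a + b] /\ positive_root Phi S x)
           \/ I k x \/ x \in S].

Definition pseudomaximal_alcove (Phi S : seq V) (k : nat) (Rg B : set V) : Prop :=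
  exists Rg' : set V,
    [/\ catalan_region Phi k.+1 Rg', dominant Phi S Rg', bounded_set Rg',
        chain_eq k.+1 (theta Phi S Rg') (underline_chain Phi S k (theta Phi S Rg)) &
        maximal_alcove Phi S k.+1 Rg' B].

End RootDefs.

(* Two alcoves B, B' with r(B, a) = r(B', a) for every positive root a
   coincide: both lie in the same open unit strip of each positive root, so the
   segment joining a point of B to a point of B' meets no hyperplane.  It thus
   suffices to show r_a(I) = r_a(underline I).  Passing to underline I only adds
   to the top ideal sums a + b with a in I_i, b in I_j, i + j = k + 1, elements
   of I_k and simple roots.  In a decomposition, a term of the first kind splits
   into two terms of the same total value, a term of the second kind drops to
   level k, and simple roots already lie in I_k, since linear independence of S
   makes a simple root indecomposable into positive roots. *)
From HB Require Import structures.
From mathcomp Require Import all_boot all_order all_algebra.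
From mathcomp Require Import all_classical all_reals all_analysis.
From mathcomp Require Import zify ring lra.
Set Implicit Arguments.
Unset Strict Implicit.
Unset Printing Implicit Defensive.
Import Order.TTheory GRing.Theory Num.Theory.
Import numFieldNormedType.Exports.
Local Open Scope classical_set_scope.
Local Open Scope ring_scope.

Section RootSystem.
Variables (R : realType) (n : nat).
Implicit Types (x y a : 'rV[R]_n) (Phi S : seq 'rV[R]_n).

Lemma dotE x a : dot x a = \sum_j x 0 j * a 0 j.
Proof. by rewrite /dot mxE; apply: eq_bigr => j _; rewrite mxE. Qed.

Lemma dotDl x y a : dot (x + y) a = dot x a + dot y a.
Proof. by rewrite /dot mulmxDl mxE. Qed.

Lemma dotZl (t : R) x a : dot (t *: x) a = t * dot x a.
Proof. by rewrite /dot -scalemxAl mxE. Qed.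

Lemma dotBl x y a : dot (x - y) a = dot x a - dot y a.
Proof. by rewrite -scaleN1r dotDl dotZl mulN1r. Qed.

Lemma dotNr x a : dot x (- a) = - dot x a.
Proof. by rewrite !dotE -sumrN; apply: eq_bigr => j _; rewrite mxE mulrN. Qed.

Lemma dot_self_eq0 a : (dot a a == 0) = (a == 0).
Proof.
apply/idP/eqP => [|->]; last by rewrite dotE big1 // => j _; rewrite mxE mul0r.
rewrite dotE psumr_eq0 => [/allP a0|j _]; last by rewrite -expr2 sqr_ge0.
apply/rowP => j; have /implyP := a0 j (mem_index_enum _).
by rewrite mulf_eq0 orbb mxE => /(_ isT)/eqP.
Qed.

Lemma root_system_opp Phi a : is_root_system Phi -> a \in Phi -> - a \in Phi.
Proof.
case=> Phi0 _ reflPhi _ aPhi; have := reflPhi a a aPhi aPhi.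
have a0 : a != 0 by apply: contraNneq Phi0 => <-.
rewrite /refl -mulrA divff ?dot_self_eq0 // mulr1.
by rewrite scalerDl scale1r opprD addrA subrr add0r.
Qed.

Lemma nth_unit_comb S i : (i < size S)%N ->
  S`_i = \sum_(j < size S) (j == i :> nat)%:R *: S`_j.
Proof.
move=> ltiS; rewrite (bigD1 (Ordinal ltiS)) //= eqxx scale1r big1 ?addr0 //.
by move=> j /negbTE ji; rewrite -val_eqE /= in ji; rewrite ji scale0r.
Qed.

Lemma simple_root_positive Phi S x :
  simple_system Phi S -> x \in S -> positive_root Phi S x.
Proof.
case=> SPhi _ _ xS; split; first exact: SPhi.
exists (fun j => (j == index x S :> nat)).
by rewrite -nth_unit_comb ?index_mem // nth_index.
Qed.

Lemma nonneg_int_comb_sum S (bs : seq 'rV[R]_n) :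
  (forall b, b \in bs -> exists c : 'I_(size S) -> nat,
      b = \sum_(i < size S) (c i)%:R *: S`_i /\ (0 < \sum_i c i)%N) ->
  exists c : 'I_(size S) -> nat,
      \sum_(b <- bs) b = \sum_(i < size S) (c i)%:R *: S`_i /\
      (size bs <= \sum_i c i)%N.
Proof.
elim: bs => [_|b bs IH bsP].
  exists (fun=> 0%N); split=> //.
  by rewrite big_nil big1 // => i _; rewrite scale0r.
have [cb [b_cb cb_gt0]] := bsP b (mem_head _ _).
have [c [bs_c c_ge]] := IH (fun b' b'bs => bsP b' (@mem_behead _ (b :: bs) b' b'bs)).
exists (fun i => cb i + c i)%N; split; last by rewrite big_split /= -add1n leq_add.
by rewrite big_cons b_cb bs_c -big_split; apply: eq_bigr => i _; rewrite natrD scalerDl.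
Qed.

Lemma lin_indep_coord_inj S (c d : 'I_(size S) -> nat) :
  lin_indep S ->
  \sum_(i < size S) (c i)%:R *: S`_i = \sum_(i < size S) (d i)%:R *: S`_i ->
  c =1 d.
Proof.
move=> indepS cd i; apply/eqP; rewrite -(eqr_nat R) -subr_eq0; apply/eqP.
apply: (indepS (fun i => (c i)%:R - (d i)%:R)); under eq_bigr do rewrite scalerBl.
by rewrite sumrB cd subrr.
Qed.

Lemma positive_root_coord_sum_gt0 Phi S a :
  is_root_system Phi -> positive_root Phi S a ->
  exists c : 'I_(size S) -> nat,
    a = \sum_(i < size S) (c i)%:R *: S`_i /\ (0 < \sum_i c i)%N.
Proof.
case=> Phi0 _ _ _ [aPhi [c a_c]]; exists c; split=> //.
rewrite lt0n sum_nat_eq0; apply: contraNN Phi0 => /forallP c0.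
rewrite -[0 : 'rV_n](_ : a = 0) // a_c big1 // => i _.
by have /implyP/(_ isT)/eqP-> := c0 i; rewrite scale0r.
Qed.

Lemma simple_root_decomposition Phi S x (bs : seq 'rV[R]_n) :
  is_root_system Phi -> simple_system Phi S -> x \in S ->
  (forall b, b \in bs -> positive_root Phi S b) -> x = \sum_(b <- bs) b ->
  size bs = 1%N.
Proof.
move=> rsPhi [SPhi indepS _] xS bsP x_bs.
have [|c [bs_c c_ge]] := @nonneg_int_comb_sum S bs.
  by move=> b /bsP; apply: positive_root_coord_sum_gt0.
have ltxS : (index x S < size S)%N by rewrite index_mem.
have := nth_unit_comb ltxS; rewrite nth_index // {1}x_bs bs_c.
move/lin_indep_coord_inj => /(_ indepS) c_x.
have c1 : (\sum_i c i = 1)%N.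
  rewrite (bigD1 (Ordinal ltxS)) //= c_x eqxx big1 // => i.
  by rewrite c_x -val_eqE => /negbTE ->.
case: bs bsP x_bs c_ge {bs_c} => [_ | b [| b' bs] _ _ ] //; last by rewrite c1.
rewrite big_nil => x0 _; case: rsPhi => Phi0 _ _ _.
by move: Phi0; rewrite -x0 SPhi.
Qed.

End RootSystem.

Lemma no_int_between_pred (R : realDomainType) (r z : int) :
  ~ ((r%:~R : R) - 1 < (z%:~R : R) < (r%:~R : R)).
Proof.
move=> /andP[]; rewrite -[1 : R]/(1%:~R) -intrB !ltr_int; lia.
Qed.

Lemma convex_comb_in_itv_oo (R : realFieldType) (lo hi u v t : R) :
  lo < u < hi -> lo < v < hi -> 0 <= t <= 1 -> lo < u + t * (v - u) < hi.
Proof.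
move=> /andP[lo_u u_hi] /andP[lo_v v_hi] /andP[t0 t1].
by have [uv|vu] := leP u v; apply/andP; split; nra.
Qed.

Lemma connected_segment (R : realType) (V : normedModType R) (x y : V) :
  connected ((fun t : R => x + t *: (y - x)) @` `[0, 1]).
Proof.
apply: connected_continuous_connected; first exact: segment_connected.
apply: continuous_subspaceT => t.
by apply: cvgD; [exact: cvg_cst | apply: cvgZr_tmp; exact: cvg_id].
Qed.

Section Alcoves.
Variables (R : realType) (n : nat) (Phi S : seq 'rV[R]_n).
Hypotheses (rsPhi : is_root_system Phi) (ssS : simple_system Phi S).
Implicit Types (x y a : 'rV[R]_n) (B : set 'rV[R]_n).

Lemma segment_in_affine_complement x y :
  (forall a, positive_root Phi S a -> exists r : int,
     (r%:~R - 1 < dot x a < r%:~R) /\ (r%:~R - 1 < dot y a < r%:~R)) ->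
  forall t : R, 0 <= t <= 1 -> affine_complement Phi (x + t *: (y - x)).
Proof.
move=> xy_strip t t01 a z aPhi; apply/eqP => az.
have dot_seg b r : (r%:~R - 1 < dot x b < r%:~R) /\ (r%:~R - 1 < dot y b < r%:~R) ->
    r%:~R - 1 < dot (x + t *: (y - x)) b < r%:~R.
  by case=> xb yb; rewrite dotDl dotZl dotBl convex_comb_in_itv_oo.
case: ssS => _ _ /(_ a aPhi) [a_pos | na_pos].
  have [r /dot_seg] := xy_strip a (conj aPhi a_pos).
  by rewrite az; apply: no_int_between_pred.
have naPhi : - a \in Phi by exact: root_system_opp.
have [r /dot_seg] := xy_strip (- a) (conj naPhi na_pos).
by rewrite dotNr az -intrN; apply: no_int_between_pred.
Qed.

Lemma alcove_r_subset B1 B2 : alcove Phi B2 ->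
  (forall a, positive_root Phi S a -> exists r, alcove_r B1 a r /\ alcove_r B2 a r) ->
  B1 `<=` B2.
Proof.
move=> [x x_compl ->] B12 y B1y.
apply: (@connected_component_max _ _ ((fun t : R => x + t *: (y - x)) @` `[0, 1])).
- by exists 0; [rewrite /= in_itv /= lexx ler01 | rewrite scale0r addr0].
- move=> z [t]; rewrite /= in_itv /= => t01 <-.
  apply: segment_in_affine_complement => // a /B12 [r [B1r B2r]]; exists r.
  by split; [exact: (B2r x (connected_component_refl x_compl)) | exact: B1r].
- exact: connected_segment.
- by exists 1; [rewrite /= in_itv /= lexx ler01 | rewrite scale1r addrC subrK].
Qed.

Lemma alcove_r_eq B1 B2 : alcove Phi B1 -> alcove Phi B2 ->
  (forall a, positive_root Phi S a -> exists r, alcove_r B1 a r /\ alcove_r B2 a r) ->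
  B1 = B2.
Proof.
move=> B1alc B2alc B12; apply/seteqP; split; apply: alcove_r_subset => // a.
by move=> /B12 [r [B1r B2r]]; exists r.
Qed.

End Alcoves.

Section Decompositions.
Variables (R : realType) (n K : nat) (I : nat -> set 'rV[R]_n).
Implicit Types (a b : 'rV[R]_n) (bs : seq 'rV[R]_n) (s t : nat).

Lemma r_achievable0 : r_achievable K I 0 0.
Proof. by exists [::], [::]; split; rewrite ?big_nil. Qed.

Lemma r_achievable1 r a : (1 <= r <= K)%N -> I r a -> r_achievable K I a r.
Proof.
move=> rK Ia; exists [:: a], [:: r].
by split; rewrite /= ?rK ?big_seq1 ?addn0 //; case.
Qed.

Lemma r_achievableD a b s t :
  r_achievable K I a s -> r_achievable K I b t -> r_achievable K I (a + b) (s + t).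
Proof.
move=> [bs [rs [szs alls Is -> ->]]] [bs' [rs' [szs' alls' Is' -> ->]]].
exists (bs ++ bs'), (rs ++ rs'); split.
- by rewrite !size_cat szs szs'.
- by rewrite all_cat alls alls'.
- move=> j; rewrite size_cat !nth_cat szs => ltj; case: ifP => [lt_j|/negbT].
    by apply: Is; rewrite szs.
  by rewrite -leqNgt => rs_j; apply: Is'; lia.
- by rewrite big_cat.
- by rewrite sumn_cat.
Qed.

Lemma r_achievable_simple_root Phi S x s :
  is_root_system Phi -> simple_system Phi S ->
  (forall i b, (1 <= i <= K)%N -> I i b -> positive_root Phi S b) ->
  x \in S -> r_achievable K I x s -> exists2 i, (1 <= i <= K)%N & I i x.
Proof.
move=> rsPhi ssS Ipos xS [bs [rs [szs alls Is x_bs _]]].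
have bsP b : b \in bs -> positive_root Phi S b.
  rewrite -index_mem => ltb; have := Is _ ltb; rewrite nth_index -?index_mem //.
  by apply: Ipos; apply: (allP alls); rewrite mem_nth // -szs.
have : size bs = 1%N by apply: (@simple_root_decomposition _ _ Phi S x).
case: bs rs szs alls Is x_bs {bsP} => [|b [|//]] // [|r [|//]] //= _.
by rewrite andbT big_seq1 => rK Is ->; exists r => //; exact: (Is 0%N).
Qed.

Lemma r_alpha_uniq a s t : r_alpha K I a s -> r_alpha K I a t -> s = t.
Proof. by move=> [sa smin] [ta tmin]; apply/eqP; rewrite eqn_leq smin ?tmin. Qed.

Definition level_sum (m : nat) (x : 'rV[R]_n) : Prop :=
  exists i1 i2 a b, [/\ (1 <= i1)%N && (1 <= i2)%N, (i1 + i2 = m)%N, I i1 a, I i2 b &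
                        x = a + b].

End Decompositions.

Section Refinement.
Variables (R : realType) (n k : nat) (I J : nat -> set 'rV[R]_n).
Hypotheses (k_gt0 : (0 < k)%N) (J_low : forall i, (1 <= i <= k)%N -> J i = I i)
  (J_top : forall x, J k.+1 x -> level_sum I k.+1 x \/ I k x).
Implicit Types (a b : 'rV[R]_n) (s : nat).

Lemma r_achievable_extend a s : r_achievable k I a s -> r_achievable k.+1 J a s.
Proof.
move=> [bs [rs [szs alls Is -> ->]]]; exists bs, rs; split=> //.
  by apply: sub_all alls => r /andP[-> /leqW].
move=> j ltj; rewrite J_low; first exact: Is.
by apply: (allP alls); rewrite mem_nth // -szs.
Qed.

Lemma r_achievable1_restrict r b : (1 <= r <= k.+1)%N -> J r b ->
  exists2 s, r_achievable k I b s & (s <= r)%N.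
Proof.
case/andP=> r_gt0; rewrite leq_eqVlt ltnS => /orP[/eqP-> | r_le_k]; last first.
  rewrite J_low ?r_gt0 // => Ib.
  by exists r => //; apply: r_achievable1; rewrite ?r_gt0 ?r_le_k.
case/J_top=> [[i1 [i2 [a [c [/andP[i1_gt0 i2_gt0] i12 Ia Ic ->]]]]] | Ib].
  exists (i1 + i2)%N; last by rewrite i12.
  by apply: r_achievableD; apply: r_achievable1 => //; apply/andP; split=> //; lia.
by exists k; [apply: r_achievable1; rewrite ?k_gt0 ?leqnn | exact: leqnSn].
Qed.

Lemma r_achievable_restrict a s : r_achievable k.+1 J a s ->
  exists2 t, r_achievable k I a t & (t <= s)%N.
Proof.
move=> [bs [rs [+ + + -> ->]]].
elim: bs rs => [|b bs IH] [|r rs] //= => [_ _ _ | [szs] /andP[r_k alls] Js].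
  by exists 0%N; rewrite ?big_nil //; exact: r_achievable0.
have [s_b ach_b le_b] := r_achievable1_restrict r_k (Js 0%N isT).
have [t ach_t le_t] := IH rs szs alls (fun j => Js j.+1).
by exists (s_b + t)%N; [rewrite big_cons; exact: r_achievableD | exact: leq_add].
Qed.

Lemma r_alpha_extend a s : r_alpha k I a s -> r_alpha k.+1 J a s.
Proof.
move=> [ach_s s_min]; split=> [|t /r_achievable_restrict [u ach_u le_ut]].
  exact: r_achievable_extend.
exact: leq_trans (s_min _ ach_u) le_ut.
Qed.

End Refinement.

Section Chains.
Variables (R : realType) (n : nat) (Phi S : seq 'rV[R]_n).
Implicit Types (Rg : set 'rV[R]_n) (I : nat -> set 'rV[R]_n) (x : 'rV[R]_n).

Lemma theta_le Rg i j : (i <= j)%N -> theta Phi S Rg i `<=` theta Phi S Rg j.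
Proof.
move=> ij x [x_pos x_lt]; split=> // y Rg_y.
by apply: lt_le_trans (x_lt y Rg_y) _; rewrite ler_nat.
Qed.

Lemma simple_root_in_theta Rg K x s :
  is_root_system Phi -> simple_system Phi S -> x \in S ->
  r_achievable K (theta Phi S Rg) x s -> theta Phi S Rg K x.
Proof.
move=> rsPhi ssS xS ach.
have theta_pos i b : (1 <= i <= K)%N -> theta Phi S Rg i b -> positive_root Phi S b.
  by move=> _ [].
have [i /andP[_ iK]] := r_achievable_simple_root rsPhi ssS theta_pos xS ach.
exact: theta_le.
Qed.

Lemma underline_chain_low k I i : (i <= k)%N -> underline_chain Phi S k I i = I i.
Proof. by rewrite /underline_chain => ->. Qed.

Lemma underline_chain_top k I x : (forall y, y \in S -> I k y) ->
  underline_chain Phi S k I k.+1 x -> level_sum I k.+1 x \/ I k x.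
Proof.
rewrite /underline_chain ltnn /= => S_Ik [[i1 [i2 [a [b [sum_ab _]]]]] | [Ikx | xS]].
- by left; exists i1, i2, a, b.
- by right.
- by right; apply: S_Ik.
Qed.

End Chains.

Theorem proposition11 (R : realType) (n : nat) (Phi S : seq 'rV[R]_n) (k : nat)
    (Rg : set 'rV[R]_n) :
  is_root_system Phi -> crystallographic Phi -> irreducible_rs Phi ->
  simple_system Phi S -> (0 < k)%N ->
  catalan_region Phi k Rg -> dominant Phi S Rg -> bounded_set Rg ->
  forall B B' : set 'rV[R]_n,
    maximal_alcove Phi S k Rg B -> pseudomaximal_alcove Phi S k Rg B' -> B' = B.
Proof.
move=> rsPhi _ _ ssS k_gt0 _ _ _ B B' [alcB rB] [Rg' [_ _ _ chain [alcB' rB']]].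
set I := theta Phi S Rg; set J := theta Phi S Rg'.
have S_Ik x : x \in S -> I k x.
  move=> xS; have [s [ach _] _] := rB x (simple_root_positive ssS xS).
  exact: simple_root_in_theta ach.
have J_low i : (1 <= i <= k)%N -> J i = I i.
  by case/andP=> i_gt0 ik; rewrite /J chain ?i_gt0 ?(leqW ik) // underline_chain_low.
have J_top x : J k.+1 x -> level_sum I k.+1 x \/ I k x.
  by rewrite /J chain ?ltnSn //; exact: underline_chain_top.
apply: (alcove_r_eq rsPhi ssS) => // a a_pos.
have [s sI Br] := rB a a_pos; have [s' sJ B'r] := rB' a a_pos.
exists (Posz s); split=> //.
by rewrite (r_alpha_uniq (r_alpha_extend k_gt0 J_low J_top sI) sJ).
Qed.
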